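(* There exist commutative rings $R_1$ and $R_2$ with $R_1 = 0$ (the zero ring) such that $R = R_1 \times R_2$ is a commutative weakly tripotent ring, but $R_2$ is not a tripotent ring of characteristic three.
   Context: All rings are associative with identity $1$. An element $a$ of a ring $R$ is tripotent if $a^3 = a$; a ring is tripotent if every element is tripotent. An element $a$ of $R$ is weakly tripotent if $a^3 = a$ or $(1+a)^3 = 1+a$; a ring $R$ is weakly tripotent if every element of $R$ is weakly tripotent. *)

From HB Require Import structures.
From mathcomp Require Import all_boot all_order all_algebra.
Set Implicit Arguments. Unset Strict Implicit. Unset Printing Implicit Defensive.
Import GRing.Theory.
Local Open Scope ring_scope.

Definition tripotent_elt (R : pzRingType) (a : R) : Prop := a ^+ 3 = a.
Definition tripotent_ring (R : pzRingType) : Prop := forall a : R, tripotent_elt a.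
Definition weakly_tripotent_elt (R : pzRingType) (a : R) : Prop :=
  tripotent_elt a \/ tripotent_elt (1 + a).
Definition weakly_tripotent_ring (R : pzRingType) : Prop :=
  forall a : R, weakly_tripotent_elt a.
(* R has characteristic n: the kernel of Z -> R restricted to nat is nZ,
   i.e. n is the least positive m with m%:R = 0 (or 0 if there is none). *)
Definition has_char (R : pzRingType) (n : nat) : Prop :=
  forall m : nat, (m%:R == 0 :> R) = (n %| m)%N.
Definition is_zero_ring (R : pzRingType) : Prop := forall x : R, x = 0.

From HB Require Import structures.
From mathcomp Require Import all_boot all_order all_algebra.

(* Take R1 = 0 and R2 = F_2. Being Boolean, F_2 is tripotent, hence so is
   0 x F_2, in particular weakly tripotent; but F_2 has characteristic 2. *)

Set Implicit Arguments. Unset Strict Implicit. Unset Printing Implicit Defensive.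
Import GRing.Theory.
Local Open Scope ring_scope.

Definition zero_ring := unit.

Lemma zero_ring_eq (x y : zero_ring) : x = y. Proof. by case: x; case: y. Qed.

HB.instance Definition _ := Choice.on zero_ring.
HB.instance Definition _ := @GRing.isZmodule.Build zero_ring tt (fun _ => tt)
  (fun _ _ => tt) (fun _ _ _ => zero_ring_eq _ _) (fun _ _ => zero_ring_eq _ _)
  (fun _ => zero_ring_eq _ _) (fun _ => zero_ring_eq _ _).
HB.instance Definition _ := @GRing.Zmodule_isComPzRing.Build zero_ring tt
  (fun _ _ => tt) (fun _ _ _ => zero_ring_eq _ _) (fun _ _ => zero_ring_eq _ _)
  (fun _ => zero_ring_eq _ _) (fun _ _ _ => zero_ring_eq _ _).

Lemma zero_ringP : is_zero_ring zero_ring.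
Proof. by move=> x; apply: zero_ring_eq. Qed.

Section Tripotent.

Variable R : pzRingType.

Lemma tripotent_weakly_tripotent : tripotent_ring R -> weakly_tripotent_ring R.
Proof. by move=> triR a; left. Qed.

Lemma idempotent_tripotent (a : R) : a ^+ 2 = a -> tripotent_elt a.
Proof. by move=> a2; rewrite /tripotent_elt exprS a2 -expr2 a2. Qed.

Lemma zero_ring_tripotent : is_zero_ring R -> tripotent_ring R.
Proof. by move=> R0 a; rewrite /tripotent_elt (R0 (a ^+ 3)) (R0 a). Qed.

End Tripotent.

Lemma tripotent_ring_pair (R1 R2 : pzRingType) :
  tripotent_ring R1 -> tripotent_ring R2 -> tripotent_ring (R1 * R2)%type.
Proof.
move=> tri1 tri2 x; rewrite /tripotent_elt [x ^+ 3]surjective_pairing.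
by rewrite (rmorphXn fst) (rmorphXn snd) tri1 tri2; case: x.
Qed.

Lemma has_char_unique (R : pzRingType) (m n : nat) :
  has_char R m -> has_char R n -> m = n.
Proof.
move=> Rm Rn; apply/eqP.
by rewrite eqn_dvd -(Rm n) (Rn n) dvdnn -(Rn m) (Rm m) dvdnn.
Qed.

Lemma Fp_has_char (p : nat) : prime p -> has_char 'F_p p.
Proof. by move=> p_pr m; rewrite -val_eqE /= val_Fp_nat. Qed.

Lemma F2_tripotent : tripotent_ring 'F_2.
Proof. by move=> a; apply: idempotent_tripotent; case: a => -[|[|//]] ?; apply/val_inj. Qed.

Theorem proposition2p1 :
  exists (R1 R2 : comPzRingType),
    is_zero_ring R1 /\
    weakly_tripotent_ring (R1 * R2)%type /\
    ~ (tripotent_ring R2 /\ has_char R2 3).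
Proof.
exists zero_ring, ('F_2 : comPzRingType); split; first exact: zero_ringP.
split.
  apply: tripotent_weakly_tripotent; apply: tripotent_ring_pair F2_tripotent.
  exact: zero_ring_tripotent zero_ringP.
case=> _ char3.
by have := has_char_unique char3 (@Fp_has_char 2 isT).
Qed.
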